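(* Let $K\ge 2$, and let $\mathbf{z}_r$ and $\mathrm{OPT}\text{-}\mathbf{Q}^\star$ be as defined in the context. Let $\lambda_j^\star$ be the $j$-th eigenvalue of $\mathbf{Q}^\star$, with $\lambda_j^\star=0$ if $j>r^\star$, and define $\delta^\star=\min\{\min_{j\in[r-1]}|\lambda_j^\star-\lambda_{j+1}^\star|,\ \lambda_r^\star\}$. If $r\le r^\star$ and $\|\mathbf{H}\|_2\le\delta^\star/2$, then $$\left|\mathrm{OPT}\text{-}\mathbf{Q}^\star-\mathbf{z}_r^\dagger\mathbf{Q}^\star\mathbf{z}_r\right|\le O\!\left(n\left(\lambda_{r+1}^\star+\frac{\lambda_1^\star}{\delta^\star}\|\mathbf{H}\|_2\right)\right).$$
   Context: $\mathcal{A}_K=\{\exp(2\pi\mathrm{i}k/K):k=0,\dots,K-1\}$. $\mathbf{Q}^\star\in\mathbb{C}^{n\times n}$ is Hermitian positive semi-definite of rank $r^\star$, with eigendecomposition $\mathbf{Q}^\star=\sum_{i=1}^{r^\star}\lambda_i^\star\mathbf{u}_i^\star\mathbf{u}_i^{\star\dagger}$, $\lambda_1^\star\ge\lambda_2^\star\ge\dots$. $\mathbf{H}\in\mathbb{C}^{n\times n}$ is an arbitrary (not necessarily Hermitian) matrix and $\mathbf{Q}=\mathbf{Q}^\star+\mathbf{H}$. $\mathbf{Q}_r=\mathbf{V}_r\boldsymbol{\Sigma}_r\mathbf{V}_r^\dagger$, where $\boldsymbol{\Sigma}_r$ is the diagonal matrix of the top-$r$ singular values of $\mathbf{Q}$ and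 $\mathbf{V}_r$ the matrix of the corresponding top-$r$ left singular vectors. $\mathrm{OPT}\text{-}\mathbf{Q}^\star=\max_{\mathbf{z}\in\mathcal{A}_K^n}\mathbf{z}^\dagger\mathbf{Q}^\star\mathbf{z}$ and $\mathbf{z}_r$ attains $\max_{\mathbf{z}\in\mathcal{A}_K^n}\mathbf{z}^\dagger\mathbf{Q}_r\mathbf{z}$. $\|\cdot\|_2$ is the spectral norm; $O(\cdot)$ hides an absolute constant. *)

From HB Require Import structures.
From mathcomp Require Import all_boot all_order all_algebra.
From mathcomp Require Import all_classical all_reals all_analysis.
From mathcomp Require Import complex.
Set Implicit Arguments. Unset Strict Implicit. Unset Printing Implicit Defensive.
Import Order.TTheory GRing.Theory Num.Theory.
Local Open Scope ring_scope.
Local Open Scope classical_set_scope.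

Section Defs.
Variable R : realType.

Definition adj (m n : nat) (A : 'M[R[i]]_(m, n)) : 'M[R[i]]_(n, m) :=
  (map_mx (@Num.conj R[i]) A)^T.

Definition vnorm (n : nat) (x : 'cV[R[i]]_n) : R :=
  Num.sqrt (\sum_(i < n) (complex.Re (x i 0) ^+ 2 + complex.Im (x i 0) ^+ 2)).

Definition specnorm (n : nat) (A : 'M[R[i]]_n) : R :=
  sup [set vnorm (A *m x) | x in [set x : 'cV[R[i]]_n | vnorm x = 1]].

Definition expi (t : R) : R[i] := Complex (cos t) (sin t).

Definition A_K (K : nat) : set R[i] :=
  [set expi (2 * pi * k%:R / K%:R) | k in [set k : nat | (k < K)%N]].

Definition inAKn (K n : nat) (z : 'cV[R[i]]_n) : Prop := forall i, A_K K (z i 0).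

Definition qform (n : nat) (A : 'M[R[i]]_n) (z : 'cV[R[i]]_n) : R[i] :=
  (adj z *m A *m z) 0 0.

(* delta* = min( min_{j in [r-1]} |lam_j - lam_{j+1}|, lam_r )  (1-indexed lam) *)
Definition delta (lam : nat -> R) (r : nat) : R :=
  foldr Num.min (lam r) [seq `|lam j - lam j.+1| | j <- iota 1 (r - 1)].

End Defs.

From HB Require Import structures.
From mathcomp Require Import all_boot all_order all_algebra.
From mathcomp Require Import all_classical all_reals all_analysis.
From mathcomp Require Import complex.
From mathcomp Require Import ring lra zify.
Import Order.TTheory GRing.Theory Num.Theory.
Local Open Scope ring_scope.

Set Implicit Arguments. Unset Strict Implicit. Unset Printing Implicit Defensive.

(* Write [Qs + H = sum_i sig_i v_i w_i^*].  For unimodular [z] the quadratic forms of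
   [Qs] and of the surrogate [Qr] differ by at most [n (lam_{r+1} + O(lam_1 |H| / delta))],
   and maximizing a surrogate that is uniformly [b]-close loses at most [2 b].
   The error [Qs - Qr] splits into [-H], a truncation term [sum_{i>r} sig_i v_i w_i^*],
   bounded by Weyl's inequality [sig_{r+1} <= lam_{r+1} + |H|], and a rotation term
   [sum_{i<=r} sig_i v_i (w_i - v_i)^*].  As [Qs] is Hermitian, the gaps [d_i = w_i - v_i]
   solve the Sylvester equation [Qs D + D Sigma_r = H^* V_r - H W_r]; since [Qs >= 0] and
   [Sigma_r >= sig_r >= lam_r / 2] (Weyl again), [|D| <= 2 |H| / sig_r].  That bound
   comes from the contraction [D = (I - a Qs) D (I - a Sigma_r) + O(a)] as [a -> 0]. *)

Notation oneto m := (index_iota 1 m.+1).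

Lemma oneto_subset m p : (m <= p)%N -> {subset oneto m <= oneto p}.
Proof. by move=> mp i; rewrite !mem_index_iota => /andP[-> /leq_trans->]. Qed.

Section RealFacts.
Variable R : realType.

Lemma ler_of_sqr (a b : R) : 0 <= b -> a ^+ 2 <= b ^+ 2 -> a <= b.
Proof. by move=> b0 ab; case: (lerP a b) => // ba; nra. Qed.

Lemma ler_of_small_param (x y z a0 : R) : 0 < a0 ->
  (forall a, 0 < a -> a <= a0 -> x <= y + a * z) -> x <= y.
Proof.
move=> a00 hx; apply/ler_addgt0Pr => e e0.
have z1 : 0 < `|z| + 1 by rewrite ltr_pwDr ?normr_ge0.
pose a := Num.min a0 (e / (`|z| + 1)).
have a0' : 0 < a by rewrite lt_min a00 divr_gt0.
apply: le_trans (hx a a0' _) _; first by rewrite ge_min lexx.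
rewrite lerD2l.
have aez : a * (`|z| + 1) <= e by rewrite -ler_pdivlMr // ge_min lexx orbT.
have := ler_norm z; have := normr_ge0 z; nra.
Qed.

(* The best constant [M] in [f <= M g] satisfies [M <= rho M + k]. *)
Lemma contraction_le (T : Type) (f g : T -> R) (phi : T -> T) (c rho k : R) :
  (forall y, 0 <= f y) -> (forall y, 0 <= g y) -> (forall y, f y <= c * g y) ->
  0 <= rho < 1 -> 0 <= k ->
  (forall y, g (phi y) <= rho * g y) ->
  (forall y, f y <= f (phi y) + k * g y) ->
  forall y, f y <= k / (1 - rho) * g y.
Proof.
move=> f0 g0 fc /andP[rho0 rho1] k0 gphi fphi y0.
pose S := range (fun y => f y / g y); pose M := sup S.
have ubS : ubound S (Num.max c 0).
  move=> _ [y _ <-]; have [gy0|gy0] := eqVneq (g y) 0.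
    by rewrite gy0 invr0 mulr0 le_max lexx orbT.
  rewrite ler_pdivrMr ?lt0r ?gy0 ?g0 //; apply: le_trans (fc y) _.
  by apply: ler_wpM2r => //; rewrite le_max lexx.
have fM y : f y <= M * g y.
  have [gy0|gy0] := eqVneq (g y) 0; first by have := fc y; rewrite gy0 !mulr0.
  rewrite -ler_pdivrMr ?lt0r ?gy0 ?g0 //.
  by apply: ub_le_sup; [exists (Num.max c 0) | exists y].
have M0 : 0 <= M.
  apply: le_trans (divr_ge0 (f0 y0) (g0 y0)) _.
  by apply: ub_le_sup; [exists (Num.max c 0) | exists y0].
have fMk y : f y <= (M * rho + k) * g y.
  apply: le_trans (fphi y) _; rewrite mulrDl lerD2r -mulrA.
  by apply: le_trans (fM _) _; apply: ler_wpM2l.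
have MMk : M <= M * rho + k.
  apply: ge_sup; first by exists (f y0 / g y0), y0.
  move=> _ [y _ <-]; have [gy0|gy0] := eqVneq (g y) 0.
    by rewrite gy0 invr0 mulr0 addr_ge0 ?mulr_ge0.
  by rewrite ler_pdivrMr ?fMk // lt0r gy0 g0.
apply: le_trans (fM y0) _; apply: ler_wpM2r => //.
by rewrite ler_pdivlMr ?subr_gt0 //; lra.
Qed.

End RealFacts.

(** * Complex column vectors *)

Section ComplexScalars.
Variable R : realType.
Implicit Types (a : R) (c d : R[i]).

Definition sqnormc c : R := complex.Re c ^+ 2 + complex.Im c ^+ 2.

Lemma ReD c d : complex.Re (c + d) = complex.Re c + complex.Re d.
Proof. by case: c; case: d. Qed.

Lemma ReN c : complex.Re (- c) = - complex.Re c.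
Proof. by case: c. Qed.

Lemma ReB c d : complex.Re (c - d) = complex.Re c - complex.Re d.
Proof. by rewrite ReD ReN. Qed.

Lemma Re_sum (I : Type) (s : seq I) (P : pred I) (F : I -> R[i]) :
  complex.Re (\sum_(i <- s | P i) F i) = \sum_(i <- s | P i) complex.Re (F i).
Proof. exact: (big_morph _ ReD (erefl : complex.Re 0 = 0)). Qed.

Lemma ReJ c : complex.Re c^* = complex.Re c.
Proof. by case: c. Qed.

Lemma Re_realCM a c : complex.Re (a%:C%C * c) = a * complex.Re c.
Proof. by case: c => x y /=; ring. Qed.

Lemma conj_realC a : (a%:C%C)^* = a%:C%C.
Proof. by apply/eqP; rewrite eq_complex /= oppr0 !eqxx. Qed.

Lemma conj_realCM a c : (a%:C%C * c)^* = a%:C%C * c^*.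
Proof.
by case: c => x y; apply/eqP; rewrite eq_complex /=; apply/andP; split; apply/eqP; ring.
Qed.

Lemma sqnormcE c : c^* * c = (sqnormc c)%:C%C.
Proof.
case: c => x y; apply/eqP; rewrite eq_complex /sqnormc /=.
by apply/andP; split; apply/eqP; ring.
Qed.

Lemma sqnormc_ge0 c : 0 <= sqnormc c.
Proof. by rewrite addr_ge0 ?sqr_ge0. Qed.

Lemma sqnormc0 : sqnormc 0 = 0.
Proof. by rewrite /sqnormc /= expr0n addr0. Qed.

Lemma sqnormc_gt0 c : c != 0 -> 0 < sqnormc c.
Proof.
move=> c0; rewrite lt_def sqnormc_ge0 andbT; apply: contra c0.
case: c => x y; rewrite /sqnormc /= paddr_eq0 ?sqr_ge0 // !sqrf_eq0.
by case/andP => /eqP -> /eqP ->.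
Qed.

Lemma sqnormcM c d : sqnormc (c * d) = sqnormc c * sqnormc d.
Proof. by case: c => x y; case: d => x' y'; rewrite /sqnormc /=; ring. Qed.

Lemma sqnormc_real a : sqnormc a%:C%C = a ^+ 2.
Proof. by rewrite /sqnormc /=; ring. Qed.

End ComplexScalars.

Section Adjoint.
Variable R : realType.

Lemma adjmxE m p (A : 'M[R[i]]_(m, p)) i j : adj A i j = (A j i)^*.
Proof. by rewrite !mxE. Qed.

Lemma adjmxD m p (A B : 'M[R[i]]_(m, p)) : adj (A + B) = adj A + adj B.
Proof. by apply/matrixP => i j; rewrite !mxE rmorphD. Qed.

Lemma adjmx_sum m p (I : Type) (s : seq I) (P : pred I) (F : I -> 'M[R[i]]_(m, p)) :
  adj (\sum_(i <- s | P i) F i) = \sum_(i <- s | P i) adj (F i).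
Proof.
apply: (big_morph _ (@adjmxD m p)).
by apply/matrixP => i j; rewrite !mxE rmorph0.
Qed.

Lemma adjmxZ m p c (A : 'M[R[i]]_(m, p)) : adj (c *: A) = c^* *: adj A.
Proof. by apply/matrixP => i j; rewrite !mxE rmorphM. Qed.

Lemma adjmxM m p q (A : 'M[R[i]]_(m, p)) (B : 'M[R[i]]_(p, q)) :
  adj (A *m B) = adj B *m adj A.
Proof.
apply/matrixP => i j; rewrite !mxE rmorph_sum; apply: eq_bigr => k _.
by rewrite !mxE rmorphM mulrC.
Qed.

Lemma adjmxK m p (A : 'M[R[i]]_(m, p)) : adj (adj A) = A.
Proof. by apply/matrixP => i j; rewrite !mxE conjCK. Qed.

End Adjoint.

Section InnerProduct.
Variables (R : realType) (n : nat).
Implicit Types (x y z : 'cV[R[i]]_n) (A : 'M[R[i]]_n).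

Definition dot x y : R[i] := (adj x *m y) 0 0.

Definition sqvnorm x : R := \sum_k sqnormc (x k 0).

Lemma dotDr x y z : dot x (y + z) = dot x y + dot x z.
Proof. by rewrite /dot mulmxDr mxE. Qed.

Lemma dotZr x y c : dot x (c *: y) = c * dot x y.
Proof. by rewrite /dot -scalemxAr mxE. Qed.

Lemma dotNr x y : dot x (- y) = - dot x y.
Proof. by rewrite -scaleN1r dotZr mulN1r. Qed.

Lemma dotBr x y z : dot x (y - z) = dot x y - dot x z.
Proof. by rewrite dotDr dotNr. Qed.

Lemma dot_sumr x (I : Type) (s : seq I) (P : pred I) (F : I -> 'cV[R[i]]_n) :
  dot x (\sum_(i <- s | P i) F i) = \sum_(i <- s | P i) dot x (F i).
Proof. by apply: (big_morph _ (dotDr x)); rewrite /dot mulmx0 mxE. Qed.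

Lemma dotC x y : dot y x = (dot x y)^*.
Proof. by rewrite /dot -adjmxE adjmxM adjmxK. Qed.

Lemma dotDl x y z : dot (x + y) z = dot x z + dot y z.
Proof. by rewrite /dot adjmxD mulmxDl mxE. Qed.

Lemma dotZl x y c : dot (c *: x) y = c^* * dot x y.
Proof. by rewrite /dot adjmxZ -scalemxAl mxE. Qed.

Lemma dotNl x y : dot (- x) y = - dot x y.
Proof. by rewrite -scaleN1r dotZl rmorphN1 mulN1r. Qed.

Lemma dotBl x y z : dot (x - y) z = dot x z - dot y z.
Proof. by rewrite dotDl dotNl. Qed.

Lemma dot_suml y (I : Type) (s : seq I) (P : pred I) (F : I -> 'cV[R[i]]_n) :
  dot (\sum_(i <- s | P i) F i) y = \sum_(i <- s | P i) dot (F i) y.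
Proof.
apply: (big_morph _ (fun u v => dotDl u v y)).
by rewrite /dot (_ : adj 0 = 0) ?mul0mx ?mxE //; apply/matrixP => i j; rewrite !mxE rmorph0.
Qed.

Lemma Re_dotC x y : complex.Re (dot y x) = complex.Re (dot x y).
Proof. by rewrite dotC ReJ. Qed.

Lemma dot_mulmxr A x y : dot x (A *m y) = dot (adj A *m x) y.
Proof. by rewrite /dot adjmxM adjmxK mulmxA. Qed.

Lemma qformE A z : qform A z = dot z (A *m z).
Proof. by rewrite /qform /dot mulmxA. Qed.

Lemma rank1_mulmx x y z : (x *m adj y) *m z = dot y z *: x.
Proof. by rewrite -mulmxA [adj y *m z]mx11_scalar mul_mx_scalar. Qed.

Lemma dotvv x : dot x x = (sqvnorm x)%:C%C.
Proof.
rewrite /dot mxE rmorph_sum; apply: eq_bigr => k _.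
by rewrite !mxE sqnormcE.
Qed.

Lemma Re_dotvv x : complex.Re (dot x x) = sqvnorm x.
Proof. by rewrite dotvv. Qed.

Lemma sqvnorm_ge0 x : 0 <= sqvnorm x.
Proof. by apply: sumr_ge0 => k _; apply: sqnormc_ge0. Qed.

Lemma vnormE x : vnorm x = Num.sqrt (sqvnorm x).
Proof. by []. Qed.

Lemma vnorm_ge0 x : 0 <= vnorm x.
Proof. exact: sqrtr_ge0. Qed.

Lemma vnorm_sqr x : vnorm x ^+ 2 = sqvnorm x.
Proof. by rewrite vnormE sqr_sqrtr ?sqvnorm_ge0. Qed.

Lemma vnorm_gt0 x : (0 < vnorm x) = (0 < sqvnorm x).
Proof. by rewrite vnormE sqrtr_gt0. Qed.

Lemma sqvnormD x y :
  sqvnorm (x + y) = sqvnorm x + 2 * complex.Re (dot x y) + sqvnorm y.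
Proof.
by rewrite -!Re_dotvv dotDl !dotDr !ReD (Re_dotC x y); ring.
Qed.

Lemma sqvnormN x : sqvnorm (- x) = sqvnorm x.
Proof. by rewrite -!Re_dotvv dotNl dotNr opprK. Qed.

Lemma sqvnormZ c x : sqvnorm (c *: x) = sqnormc c * sqvnorm x.
Proof.
by rewrite -!Re_dotvv dotZl dotZr mulrA sqnormcE Re_realCM.
Qed.

Lemma vnormZ c x : vnorm (c *: x) = Num.sqrt (sqnormc c) * vnorm x.
Proof. by rewrite !vnormE sqvnormZ sqrtrM ?sqnormc_ge0. Qed.

Lemma vnormZr a x : vnorm (a%:C%C *: x) = `|a| * vnorm x.
Proof. by rewrite vnormZ sqnormc_real sqrtr_sqr. Qed.

Lemma vnormN x : vnorm (- x) = vnorm x.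
Proof. by rewrite !vnormE sqvnormN. Qed.

Lemma vnorm0 : vnorm (0 : 'cV[R[i]]_n) = 0.
Proof. by rewrite vnormE /sqvnorm big1 ?sqrtr0 // => k _; rewrite mxE sqnormc0. Qed.

Lemma Re_dot_le x y : complex.Re (dot x y) <= vnorm x * vnorm y.
Proof.
apply: ler_of_sqr; first by rewrite mulr_ge0 ?vnorm_ge0.
rewrite exprMn !vnorm_sqr; set t := complex.Re (dot x y).
have quad (s : R) : 0 <= sqvnorm x + 2 * s * t + s ^+ 2 * sqvnorm y.
  have := sqvnorm_ge0 (x + s%:C%C *: y).
  by rewrite sqvnormD sqvnormZ dotZr Re_realCM sqnormc_real -/t mulrA.
have [y0|y0] := eqVneq (sqvnorm y) 0.
  rewrite y0 mulr0; have [->|t0] := eqVneq t 0; first by rewrite expr0n.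
  have := quad (- (sqvnorm x + 1) / (2 * t)); rewrite y0 mulr0 addr0.
  have -> : 2 * (- (sqvnorm x + 1) / (2 * t)) * t = - (sqvnorm x + 1) by field.
  lra.
have ypos : 0 < sqvnorm y by rewrite lt0r y0 sqvnorm_ge0.
have := quad (- t / sqvnorm y).
have -> : sqvnorm x + 2 * (- t / sqvnorm y) * t + (- t / sqvnorm y) ^+ 2 * sqvnorm y
   = (sqvnorm x * sqvnorm y - t ^+ 2) / sqvnorm y by field.
by rewrite pmulr_lge0 ?invr_gt0 // subr_ge0.
Qed.

Lemma normr_Re_dot_le x y : `|complex.Re (dot x y)| <= vnorm x * vnorm y.
Proof.
rewrite ler_norml Re_dot_le andbT.
by have := Re_dot_le (- x) y; rewrite dotNl ReN vnormN; lra.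
Qed.

Lemma vnormD x y : vnorm (x + y) <= vnorm x + vnorm y.
Proof.
apply: ler_of_sqr; first by rewrite addr_ge0 ?vnorm_ge0.
rewrite vnorm_sqr sqvnormD -!vnorm_sqr.
by have := Re_dot_le x y; lra.
Qed.

Lemma vnormB x y : vnorm (x - y) <= vnorm x + vnorm y.
Proof. by rewrite -(vnormN y) vnormD. Qed.

Lemma vnorm_sum (I : Type) (s : seq I) (P : pred I) (F : I -> 'cV[R[i]]_n) :
  vnorm (\sum_(i <- s | P i) F i) <= \sum_(i <- s | P i) vnorm (F i).
Proof.
elim/big_rec2: _ => [|i a b _ h]; first by rewrite vnorm0.
by apply: le_trans (vnormD _ _) _; rewrite lerD2l.
Qed.

End InnerProduct.

(** * Orthonormal families and the spectral norm *)

Section Orthonormal.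
Variables (R : realType) (n : nat).
Implicit Types (x : 'cV[R[i]]_n) (f g : nat -> 'cV[R[i]]_n) (s : seq nat).

Definition orthonormal_on f s := {in s &, forall i j, dot (f i) (f j) = (i == j)%:R}.

Lemma orthonormal_sub f s s' : orthonormal_on f s -> {subset s' <= s} -> orthonormal_on f s'.
Proof. by move=> fs ss' i j /ss' + /ss'; apply: fs. Qed.

Lemma orthonormal_oneto f m :
  (forall i j, (1 <= i <= m)%N -> (1 <= j <= m)%N -> adj (f i) *m f j = (i == j)%:R%:M) ->
  orthonormal_on f (oneto m).
Proof.
move=> hf i j; rewrite !mem_index_iota !ltnS => hi hj.
by rewrite /dot hf // mxE eqxx mulr1n.
Qed.

Lemma dot_orthonormal_sum f s (c : nat -> R[i]) j : uniq s -> orthonormal_on f s ->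
  j \in s -> dot (f j) (\sum_(i <- s) c i *: f i) = c j.
Proof.
move=> us fs js; rewrite dot_sumr (bigD1_seq j) //= dotZr fs // eqxx mulr1.
rewrite big_seq_cond big1 ?addr0 // => i /andP[si ij].
by rewrite dotZr fs // eq_sym (negbTE ij) mulr0.
Qed.

Lemma expansion_at_orthonormal f g s (c : nat -> R[i]) i : uniq s -> orthonormal_on f s ->
  i \in s -> \sum_(j <- s) (c j * dot (f j) (f i)) *: g j = c i *: g i.
Proof.
move=> us fs si; rewrite (bigD1_seq i) //= fs // eqxx mulr1.
rewrite big_seq_cond big1 ?addr0 // => j /andP[sj ji].
by rewrite fs // (negbTE ji) mulr0 scale0r.
Qed.

Lemma sqvnorm_orthonormal_sum f s (c : nat -> R[i]) : uniq s -> orthonormal_on f s ->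
  sqvnorm (\sum_(i <- s) c i *: f i) = \sum_(i <- s) sqnormc (c i).
Proof.
move=> us fs; rewrite -Re_dotvv dot_suml Re_sum big_seq [RHS]big_seq.
by apply: eq_bigr => j js; rewrite dotZl dot_orthonormal_sum // sqnormcE.
Qed.

Lemma vnorm_orthonormal_sum f s (c : nat -> R[i]) : uniq s -> orthonormal_on f s ->
  vnorm (\sum_(i <- s) c i *: f i) = Num.sqrt (\sum_(i <- s) sqnormc (c i)).
Proof. by move=> us fs; rewrite vnormE sqvnorm_orthonormal_sum. Qed.

Lemma vnorm_orthonormal_sum_gt0 f s (c : nat -> R[i]) k : uniq s -> orthonormal_on f s ->
  k \in s -> c k != 0 -> 0 < vnorm (\sum_(i <- s) c i *: f i).
Proof.
move=> us fs sk ck; rewrite vnorm_gt0 sqvnorm_orthonormal_sum // (bigD1_seq k) //=.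
by rewrite ltr_pwDl ?sqnormc_gt0 // sumr_ge0 // => i _; apply: sqnormc_ge0.
Qed.

Lemma bessel f s x : uniq s -> orthonormal_on f s ->
  \sum_(i <- s) sqnormc (dot (f i) x) <= sqvnorm x.
Proof.
move=> us fs; set p := \sum_(i <- s) dot (f i) x *: f i.
have px : complex.Re (dot p x) = \sum_(i <- s) sqnormc (dot (f i) x).
  by rewrite /p dot_suml Re_sum; apply: eq_bigr => i _; rewrite dotZl sqnormcE.
have := sqvnorm_ge0 (x - p).
by rewrite sqvnormD sqvnormN dotNr ReN Re_dotC px sqvnorm_orthonormal_sum //; lra.
Qed.

Lemma vnorm_expansion_le f g s (b : nat -> R) (beta : R) x :
  uniq s -> orthonormal_on f s -> orthonormal_on g s -> 0 <= beta ->
  {in s, forall i, `|b i| <= beta} ->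
  vnorm (\sum_(i <- s) ((b i)%:C%C * dot (f i) x) *: g i) <= beta * vnorm x.
Proof.
move=> us fs gs beta0 bbeta; apply: ler_of_sqr; first by rewrite mulr_ge0 ?vnorm_ge0.
rewrite exprMn !vnorm_sqr sqvnorm_orthonormal_sum //.
apply: le_trans (_ : \sum_(i <- s) beta ^+ 2 * sqnormc (dot (f i) x) <= _).
  rewrite big_seq [leRHS]big_seq; apply: ler_sum => i si.
  rewrite sqnormcM sqnormc_real ler_wpM2r ?sqnormc_ge0 //.
  by rewrite -real_normK ?num_real // lerXn2r ?nnegrE ?bbeta.
by rewrite -mulr_sumr ler_wpM2l ?sqr_ge0 ?bessel.
Qed.

Lemma vnorm_expansion_orth_le f g p K (a : nat -> R) (beta : R) x :
  orthonormal_on f (oneto p) -> orthonormal_on g (oneto p) -> 0 <= beta ->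
  (forall j, (1 <= j < K)%N -> dot (f j) x = 0) ->
  (forall i, (K <= i <= p)%N -> `|a i| <= beta) ->
  vnorm (\sum_(i <- oneto p) ((a i)%:C%C * dot (f i) x) *: g i) <= beta * vnorm x.
Proof.
move=> fs gs beta0 xf abeta.
pose b i := if (K <= i)%N then a i else 0.
rewrite (eq_big_seq (fun i => ((b i)%:C%C * dot (f i) x) *: g i)).
  apply: vnorm_expansion_le; rewrite ?iota_uniq // => i.
  by rewrite mem_index_iota /b; case: ifP => [Ki /andP[_ ip]|]; rewrite ?normr0 // abeta ?Ki.
move=> i; rewrite mem_index_iota /b; case: (leqP K i) => // iK /andP[i1 _].
by rewrite xf ?i1 // !mulr0.
Qed.

Lemma vnorm_expansion_span_ge f g p K (a : nat -> R) (beta : R) (c : nat -> R[i]) x :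
  orthonormal_on f (oneto p) -> orthonormal_on g (oneto p) -> (K <= p)%N -> 0 <= beta ->
  (forall i, (1 <= i <= K)%N -> beta <= `|a i|) ->
  x = \sum_(k <- oneto K) c k *: f k ->
  beta * vnorm x <= vnorm (\sum_(i <- oneto p) ((a i)%:C%C * dot (f i) x) *: g i).
Proof.
move=> fs gs Kp beta0 abeta xE.
have fK : orthonormal_on f (oneto K) by apply: orthonormal_sub fs (oneto_subset Kp).
apply: ler_of_sqr; first exact: vnorm_ge0.
rewrite exprMn !vnorm_sqr {1}xE !sqvnorm_orthonormal_sum ?iota_uniq //.
rewrite [leRHS](big_cat_nat _ (n := K.+1)) //=.
apply: le_trans (_ : \sum_(1 <= i < K.+1) sqnormc ((a i)%:C%C * dot (f i) x) <= _).
  rewrite mulr_sumr big_seq [leRHS]big_seq; apply: ler_sum => i iK.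
  have ai : beta <= `|a i| by move: iK; rewrite mem_index_iota ltnS => /abeta.
  rewrite sqnormcM sqnormc_real xE dot_orthonormal_sum ?iota_uniq //.
  by rewrite ler_wpM2r ?sqnormc_ge0 // -[in leRHS]real_normK ?num_real // lerXn2r ?nnegrE.
by rewrite lerDl sumr_ge0 // => i _; apply: sqnormc_ge0.
Qed.

End Orthonormal.

Section SpectralNorm.
Local Open Scope classical_set_scope.
Variables (R : realType) (n : nat).
Implicit Types (x : 'cV[R[i]]_n) (A : 'M[R[i]]_n).

Lemma vnorm_mulmx_cols_le A x : vnorm (A *m x) <= vnorm x * \sum_k vnorm (col k A).
Proof.
have -> : A *m x = \sum_k x k 0 *: col k A.
  apply/matrixP => i j; rewrite !mxE summxE; apply: eq_bigr => k _.
  by rewrite !mxE (ord1 j) mulrC.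
rewrite mulr_sumr; apply: le_trans (vnorm_sum _ _ _) _; apply: ler_sum => k _.
rewrite vnormZ ler_wpM2r ?vnorm_ge0 // vnormE ler_sqrt ?sqvnorm_ge0 //.
by rewrite /sqvnorm (bigD1 k) //= lerDl sumr_ge0 // => j _; apply: sqnormc_ge0.
Qed.

Let unit_image A := [set vnorm (A *m x) | x in [set x : 'cV[R[i]]_n | vnorm x = 1]].

Lemma specnorm_has_ubound A : has_ubound (unit_image A).
Proof.
exists (\sum_k vnorm (col k A)) => _ [x /= x1 <-].
by apply: le_trans (vnorm_mulmx_cols_le A x) _; rewrite x1 mul1r.
Qed.

Lemma vnorm_mulmx_le A x : vnorm (A *m x) <= specnorm A * vnorm x.
Proof.
have [x0|x0] := eqVneq (vnorm x) 0.
  by have := vnorm_mulmx_cols_le A x; rewrite x0 !mul0r mulr0.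
have xpos : 0 < vnorm x by rewrite lt0r x0 vnorm_ge0.
pose y := ((vnorm x)^-1)%:C%C *: x.
have ny : vnorm y = 1 by rewrite vnormZr ger0_norm ?invr_ge0 ?vnorm_ge0 // mulVf.
have : vnorm (A *m y) <= specnorm A.
  by apply: (ub_le_sup (specnorm_has_ubound A)); exists y.
rewrite -scalemxAr vnormZr ger0_norm ?invr_ge0 ?vnorm_ge0 //.
by rewrite mulrC ler_pdivrMr.
Qed.

Lemma vnorm_mulmxDl_le A B x :
  vnorm ((A + B) *m x) <= vnorm (A *m x) + specnorm B * vnorm x.
Proof. by rewrite mulmxDl; apply: le_trans (vnormD _ _) _; rewrite lerD2l vnorm_mulmx_le. Qed.

Lemma vnorm_mulmx_le_mulmxD A B x :
  vnorm (A *m x) <= vnorm ((A + B) *m x) + specnorm B * vnorm x.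
Proof.
rewrite -{1}(addrK B A) mulmxBl; apply: le_trans (vnormB _ _) _.
by rewrite lerD2l vnorm_mulmx_le.
Qed.

Lemma specnorm_ge0 A : (0 < n)%N -> 0 <= specnorm A.
Proof.
move=> n0; pose e : 'cV[R[i]]_n := \col_k ((k == Ordinal n0)%:R).
have ne : vnorm e = 1.
  rewrite vnormE /sqvnorm (bigD1 (Ordinal n0)) //= big1 => [|k /negbTE k0].
    by rewrite !mxE eqxx addr0 /sqnormc /= expr0n expr1n addr0 sqrtr1.
  by rewrite !mxE k0 sqnormc0.
apply: le_trans (vnorm_ge0 (A *m e)) _.
by apply: (ub_le_sup (specnorm_has_ubound A)); exists e.
Qed.

Lemma vnorm_adj_mulmx_le A x : 0 <= specnorm A ->
  vnorm (adj A *m x) <= specnorm A * vnorm x.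
Proof.
move=> A0; set y := adj A *m x.
have yy : vnorm y ^+ 2 <= vnorm x * (specnorm A * vnorm y).
  rewrite vnorm_sqr -Re_dotvv {2}/y -dot_mulmxr.
  apply: le_trans (Re_dot_le _ _) _.
  by rewrite ler_wpM2l ?vnorm_ge0 ?vnorm_mulmx_le.
have [y0|ypos] := eqVneq (vnorm y) 0; first by rewrite y0 mulr_ge0 ?vnorm_ge0.
have := vnorm_ge0 y; have := vnorm_ge0 x; nra.
Qed.

End SpectralNorm.

Lemma exists_kernel_row (F : fieldType) (K m : nat) (A : 'M[F]_(K, m)) :
  (m < K)%N -> exists2 c : 'rV_K, c != 0 & c *m A = 0.
Proof.
move=> mK; have : kermx A != 0.
  by rewrite kermx_eq0 /row_free; have := rank_leq_col A; lia.
by case/rowV0Pn => c /sub_kermxP cA c0; exists c.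
Qed.

Section Kernel.
Variables (R : realType) (n : nat).

(* Dimension count: [K] vectors [f k] against [m < K] linear conditions. *)
Lemma exists_orthogonal_combination (f g : nat -> 'cV[R[i]]_n) (m K : nat) :
  (m < K)%N -> exists c : nat -> R[i], (exists2 k, k \in oneto K & c k != 0) /\
    forall j, (1 <= j <= m)%N -> dot (g j) (\sum_(k <- oneto K) c k *: f k) = 0.
Proof.
case: K => [//|K] mK; pose A : 'M[R[i]]_(K.+1, m) := \matrix_(k, j) dot (g j.+1) (f k.+1).
have [v v0 vA] := exists_kernel_row A mK.
exists (fun k => v 0 (inord k.-1)); split.
  have [i [k vk]] := matrix0Pn _ v0; rewrite (ord1 i) in vk.
  exists k.+1; last by rewrite /= inord_val.
  by rewrite mem_index_iota; have := ltn_ord k; lia.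
move=> j /andP[j1 jm]; have jm' : (j.-1 < m)%N by rewrite prednK.
have := congr1 (fun B : 'rV[R[i]]_m => B 0 (Ordinal jm')) vA; rewrite !mxE => <-.
rewrite dot_sumr big_add1 /= big_mkord; apply: eq_bigr => k _.
by rewrite dotZr mxE /= inord_val prednK // mulrC.
Qed.

End Kernel.

(** * Perturbation of the truncated SVD *)

Lemma delta_le_lam (R : realType) (lam : nat -> R) r : delta lam r <= lam r.
Proof. by rewrite /delta; elim: (iota 1 (r - 1)) => //= a s IH; rewrite ge_min IH orbT. Qed.

Lemma sqvnorm_AK (R : realType) (K n : nat) (z : 'cV[R[i]]_n) : inAKn K z -> sqvnorm z = n%:R.
Proof.
move=> zK; rewrite /sqvnorm (eq_bigr (fun=> 1)) ?sumr_const ?card_ord // => k _.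
by have [j _ <-] := zK k; rewrite /sqnormc /= cos2Dsin2.
Qed.

Lemma argmax_approx_le (R : realType) (T : Type) (P : T -> Prop) (F G : T -> R)
    (b OPT : R) zr :
  (forall z, P z -> `|F z - G z| <= b) ->
  (exists z, P z /\ F z = OPT) -> (forall z, P z -> F z <= OPT) ->
  P zr -> (forall z, P z -> G z <= G zr) -> `|OPT - F zr| <= 2 * b.
Proof.
move=> FG [z [Pz <-]] Fmax Pzr Gmax; rewrite ger0_norm ?subr_ge0 ?Fmax //.
have := FG _ Pz; have := FG _ Pzr; have := Gmax _ Pz.
by rewrite !ler_norml => ? /andP[? ?] /andP[? ?]; lra.
Qed.

Lemma perturbation_constant_le (R : realType) (l1 lr1 d h s : R) :
  0 <= lr1 -> 0 <= h -> h <= d / 2 -> d <= l1 -> d / 2 <= s -> 0 < s ->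
  lr1 + 4 * h + 2 * l1 * h / s <= 8 * (lr1 + l1 / d * h).
Proof.
move=> lr0 h0 hd dl ds s0; have [d0|dpos] := lerP d 0.
  have -> : h = 0 by lra.
  by rewrite !(mulr0, mul0r, addr0); lra.
have inv_s : s^-1 <= 2 / d by rewrite -invf_div lef_pV2 ?posrE ?divr_gt0.
have t1 : 2 * l1 * h / s <= 4 * (l1 / d * h).
  rewrite (_ : 4 * _ = 2 * l1 * h * (2 / d)); last by ring.
  by rewrite ler_wpM2l // !mulr_ge0 //; lra.
have t2 : h <= l1 / d * h.
  by rewrite ler_peMl // ler_pdivlMr // mul1r.
lra.
Qed.

Section Perturbation.
Variables (R : realType) (n r rs : nat) (Qs H : 'M[R[i]]_n) (lam sig : nat -> R).
Variables (u v w : nat -> 'cV[R[i]]_n).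
Hypothesis rs_le_n : (rs <= n)%N.
Hypothesis lam_gt0 : forall j, (1 <= j <= rs)%N -> 0 < lam j.
Hypothesis lam_eq0 : forall j, (rs < j)%N -> lam j = 0.
Hypothesis lam_decr : forall j, (1 <= j)%N -> lam j.+1 <= lam j.
Hypothesis u_orth : forall i j, (1 <= i <= rs)%N -> (1 <= j <= rs)%N ->
  adj (u i) *m u j = (i == j)%:R%:M.
Hypothesis Qs_def : Qs = \sum_(1 <= i < rs.+1) ((lam i)%:C)%C *: (u i *m adj (u i)).
Hypothesis v_orth : forall i j, (1 <= i <= n)%N -> (1 <= j <= n)%N ->
  adj (v i) *m v j = (i == j)%:R%:M.
Hypothesis w_orth : forall i j, (1 <= i <= n)%N -> (1 <= j <= n)%N ->
  adj (w i) *m w j = (i == j)%:R%:M.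
Hypothesis sig_ge0 : forall j, (1 <= j <= n)%N -> 0 <= sig j.
Hypothesis sig_decr : forall j, (1 <= j)%N -> (j < n)%N -> sig j.+1 <= sig j.
Hypothesis svd : Qs + H = \sum_(1 <= i < n.+1) ((sig i)%:C)%C *: (v i *m adj (w i)).
Hypothesis r_gt0 : (1 <= r)%N.
Hypothesis r_le_rs : (r <= rs)%N.

Local Notation h := (specnorm H).

Let u_on : orthonormal_on u (oneto rs). Proof. exact: orthonormal_oneto. Qed.
Let v_on : orthonormal_on v (oneto n). Proof. exact: orthonormal_oneto. Qed.
Let w_on : orthonormal_on w (oneto n). Proof. exact: orthonormal_oneto. Qed.
Let oneto_uniq m : uniq (oneto m). Proof. exact: iota_uniq. Qed.
Let r_le_n : (r <= n)%N. Proof. exact: leq_trans r_le_rs rs_le_n. Qed.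
Let r_oneto_n : {subset oneto r <= oneto n}. Proof. exact: oneto_subset. Qed.
Let v_on_r : orthonormal_on v (oneto r). Proof. exact: orthonormal_sub v_on r_oneto_n. Qed.
Let w_on_r : orthonormal_on w (oneto r). Proof. exact: orthonormal_sub w_on r_oneto_n. Qed.
Let r_in : r \in oneto r. Proof. by rewrite mem_index_iota r_gt0 ltnSn. Qed.

Lemma h_ge0 : 0 <= h.
Proof. by apply: specnorm_ge0; apply: leq_trans r_le_n. Qed.

Lemma lam_ge0 j : (1 <= j)%N -> 0 <= lam j.
Proof. by move=> j1; case: (ltnP rs j) => [/lam_eq0->|jrs] //; rewrite ltW ?lam_gt0 ?j1. Qed.

Lemma lam_le i j : (1 <= i <= j)%N -> lam j <= lam i.
Proof.
case/andP=> i1; elim: j => [|j IH]; first by rewrite leqn0 => /eqP->.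
rewrite leq_eqVlt => /orP[/eqP-> //|ij].
exact: le_trans (lam_decr (leq_trans i1 ij)) (IH ij).
Qed.

Lemma sig_le i j : (1 <= i <= j)%N -> (j <= n)%N -> sig j <= sig i.
Proof.
case/andP=> i1; elim: j => [|j IH]; first by rewrite leqn0 => /eqP->.
rewrite leq_eqVlt => /orP[/eqP-> //|ij jn]; apply: le_trans (IH ij (ltnW jn)).
exact: sig_decr (leq_trans i1 ij) jn.
Qed.

Let lam_bound i : (1 <= i)%N -> `|lam i| <= lam 1.
Proof. by move=> i1; rewrite ger0_norm ?lam_ge0 ?lam_le ?i1. Qed.

Lemma Qs_mulmx x : Qs *m x = \sum_(i <- oneto rs) ((lam i)%:C%C * dot (u i) x) *: u i.
Proof.
by rewrite Qs_def mulmx_suml; apply: eq_bigr => i _; rewrite -scalemxAl rank1_mulmx scalerA.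
Qed.

Lemma Q_mulmx x : (Qs + H) *m x = \sum_(i <- oneto n) ((sig i)%:C%C * dot (w i) x) *: v i.
Proof.
by rewrite svd mulmx_suml; apply: eq_bigr => i _; rewrite -scalemxAl rank1_mulmx scalerA.
Qed.

Lemma adjQ_mulmx x :
  adj (Qs + H) *m x = \sum_(i <- oneto n) ((sig i)%:C%C * dot (v i) x) *: w i.
Proof.
rewrite svd adjmx_sum mulmx_suml; apply: eq_bigr => i _.
by rewrite adjmxZ conj_realC adjmxM adjmxK -scalemxAl rank1_mulmx scalerA.
Qed.

Lemma adj_Qs : adj Qs = Qs.
Proof.
rewrite {1}Qs_def adjmx_sum Qs_def; apply: eq_bigr => i _.
by rewrite adjmxZ conj_realC adjmxM adjmxK.
Qed.

Lemma vnorm_Qs_le x : vnorm (Qs *m x) <= lam 1 * vnorm x.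
Proof.
rewrite Qs_mulmx; apply: (vnorm_expansion_orth_le (K := 1)) => //; first exact: lam_ge0.
by move=> j /andP[]; case: j.
by move=> i /andP[i1 _]; apply: lam_bound.
Qed.

Lemma lam_sub_le_sig : lam r - h <= sig r.
Proof.
have r1r : (r.-1 < r)%N by rewrite ltn_predL.
have [c [[k kr ck] cw]] := exists_orthogonal_combination u w r1r.
set x := \sum_(k <- oneto r) c k *: u k in cw.
have x0 : 0 < vnorm x.
  apply: (vnorm_orthonormal_sum_gt0 _ _ kr ck) => //.
  by apply: orthonormal_sub u_on _; apply: oneto_subset.
have lamx : lam r * vnorm x <= vnorm (Qs *m x).
  rewrite Qs_mulmx; apply: (vnorm_expansion_span_ge (K := r) (c := c)) => //.
  - by apply: lam_ge0.
  - by move=> i /andP[i1 ir]; rewrite ger0_norm ?lam_ge0 ?lam_le ?i1.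
have sigx : vnorm ((Qs + H) *m x) <= sig r * vnorm x.
  rewrite Q_mulmx; apply: (vnorm_expansion_orth_le (K := r)) => //.
  - by apply: sig_ge0; rewrite r_gt0.
  - by move=> j /andP[j1 jr]; apply: cw; rewrite j1 -ltnS prednK.
  - move=> i /andP[ri ni]; rewrite ger0_norm ?sig_le ?r_gt0 ?sig_ge0 //.
    by rewrite ni (leq_trans r_gt0).
have tri := vnorm_mulmx_le_mulmxD Qs H x.
by rewrite -(ler_pM2r x0) mulrBl; lra.
Qed.

Lemma sig_succ_le : (r < n)%N -> sig r.+1 <= lam r.+1 + h.
Proof.
move=> rn; have [c [[k kr ck] cu]] := exists_orthogonal_combination w u (ltnSn r).
set x := \sum_(k <- oneto r.+1) c k *: w k in cu.
have x0 : 0 < vnorm x.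
  apply: (vnorm_orthonormal_sum_gt0 _ _ kr ck) => //.
  by apply: orthonormal_sub w_on _; apply: oneto_subset.
have sigx : sig r.+1 * vnorm x <= vnorm ((Qs + H) *m x).
  rewrite Q_mulmx; apply: (vnorm_expansion_span_ge (K := r.+1) (c := c)) => //.
  - by apply: sig_ge0; rewrite rn.
  - move=> i /andP[i1 ir]; rewrite ger0_norm ?sig_le ?i1 //.
    by apply: sig_ge0; rewrite i1 (leq_trans ir).
have lamx : vnorm (Qs *m x) <= lam r.+1 * vnorm x.
  rewrite Qs_mulmx; apply: (vnorm_expansion_orth_le (K := r.+1)) => //.
  - exact: lam_ge0.
  - by move=> i /andP[ri _]; rewrite ger0_norm ?lam_le ?lam_ge0 // (leq_trans _ ri).
have tri := vnorm_mulmxDl_le Qs H x.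
by rewrite -(ler_pM2r x0) mulrDl; lra.
Qed.

Definition gap i := w i - v i.
Definition gapH i := adj H *m v i - H *m w i.

(* [Qs] is Hermitian, so [Qs w_i = sig_i v_i - H w_i] and [Qs v_i = sig_i w_i - H^* v_i]. *)
Lemma Qs_gap i : i \in oneto n -> Qs *m gap i = gapH i - (sig i)%:C%C *: gap i.
Proof.
move=> ni.
have Qw : (Qs + H) *m w i = (sig i)%:C%C *: v i.
  by rewrite Q_mulmx; apply: expansion_at_orthonormal.
have Qv : adj (Qs + H) *m v i = (sig i)%:C%C *: w i.
  by rewrite adjQ_mulmx; apply: expansion_at_orthonormal.
rewrite mulmxDl in Qw; rewrite adjmxD adj_Qs mulmxDl in Qv.
rewrite /gap /gapH mulmxBr.
have -> : Qs *m w i = (sig i)%:C%C *: v i - H *m w i by rewrite -Qw addrK.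
have -> : Qs *m v i = (sig i)%:C%C *: w i - adj H *m v i by rewrite -Qv addrK.
by apply/matrixP => a b; rewrite !mxE; ring.
Qed.

Implicit Types y : nat -> R[i].

Definition gap_comb y := \sum_(i <- oneto r) y i *: gap i.
Definition gapH_comb y := \sum_(i <- oneto r) y i *: gapH i.
Definition cnorm y : R := Num.sqrt (\sum_(i <- oneto r) sqnormc (y i)).
Definition rescale (a : nat -> R) y i := (a i)%:C%C * y i.

Lemma cnorm_ge0 y : 0 <= cnorm y.
Proof. exact: sqrtr_ge0. Qed.

Lemma cnorm_rescale_le (a : nat -> R) (c : R) y : 0 <= c ->
  {in oneto r, forall i, `|a i| <= c} -> cnorm (rescale a y) <= c * cnorm y.
Proof.
move=> c0 ac; rewrite /cnorm -(ger0_norm c0) -sqrtr_sqr -sqrtrM ?sqr_ge0 //.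
rewrite ler_sqrt ?mulr_ge0 ?sqr_ge0 ?sumr_ge0 // => [|i _]; last exact: sqnormc_ge0.
rewrite mulr_sumr big_seq [leRHS]big_seq; apply: ler_sum => i ri.
rewrite sqnormcM sqnormc_real ler_wpM2r ?sqnormc_ge0 // -real_normK ?num_real //.
by rewrite lerXn2r ?nnegrE ?ac ?normr_ge0.
Qed.

Lemma vnorm_gap_comb_le y : vnorm (gap_comb y) <= 2 * cnorm y.
Proof.
have -> : gap_comb y = \sum_(i <- oneto r) y i *: w i - \sum_(i <- oneto r) y i *: v i.
  by rewrite /gap_comb -sumrB; apply: eq_bigr => i _; rewrite scalerBr.
apply: le_trans (vnormB _ _) _.
by rewrite !vnorm_orthonormal_sum // -/(cnorm y); lra.
Qed.

Lemma vnorm_gapH_comb_le y : vnorm (gapH_comb y) <= 2 * h * cnorm y.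
Proof.
have -> : gapH_comb y = adj H *m (\sum_(i <- oneto r) y i *: v i)
                        - H *m (\sum_(i <- oneto r) y i *: w i).
  rewrite /gapH_comb !mulmx_sumr -sumrB; apply: eq_bigr => i _.
  by rewrite scalerBr !scalemxAr.
apply: le_trans (vnormB _ _) _.
apply: le_trans (lerD (vnorm_adj_mulmx_le _ h_ge0) (vnorm_mulmx_le _ _)) _.
by rewrite !vnorm_orthonormal_sum // -/(cnorm y); lra.
Qed.

(* The Sylvester equation [Qs D + D Sigma_r = E], where [D] and [E] have columns
   [gap i] and [gapH i], applied to the coefficient vector [y]. *)
Lemma gap_comb_sig y : gap_comb (rescale sig y) = gapH_comb y - Qs *m gap_comb y.
Proof.
rewrite /gap_comb /gapH_comb /rescale mulmx_sumr -sumrB big_seq [RHS]big_seq.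
apply: eq_bigr => i ri; rewrite -scalemxAr Qs_gap ?r_oneto_n //.
by apply/matrixP => a b; rewrite !mxE; ring.
Qed.

Lemma gap_comb_rescale_sub (al : R) y :
  gap_comb (rescale (fun i => 1 - al * sig i) y)
  = gap_comb y - al%:C%C *: gap_comb (rescale sig y).
Proof.
rewrite /gap_comb /rescale scaler_sumr -sumrB; apply: eq_bigr => i _.
by rewrite scalerA -scalerBl rmorphB rmorphM rmorph1 mulrBl mul1r mulrA.
Qed.

Lemma gap_comb_step (al : R) y :
  let y' := rescale (fun i => 1 - al * sig i) y in
  gap_comb y = gap_comb y' - al%:C%C *: (Qs *m gap_comb y') + al%:C%C *: gapH_comb y
               - (al ^+ 2)%:C%C *: (Qs *m gap_comb (rescale sig y)).
Proof.
rewrite /= gap_comb_rescale_sub mulmxBr -scalemxAr.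
have := gap_comb_sig y; move: (gap_comb _) (gap_comb y) (Qs *m _) (Qs *m _) => S X QS QX ->.
by apply/matrixP => a b; rewrite !mxE rmorphM; ring.
Qed.

Lemma vnorm_sub_Qs_le (al : R) x : 0 <= al -> al * lam 1 <= 1 ->
  vnorm (x - al%:C%C *: (Qs *m x)) <= vnorm x.
Proof.
move=> al0 al1; rewrite !vnormE ler_sqrt ?sqvnorm_ge0 //.
rewrite sqvnormD sqvnormN sqvnormZ sqnormc_real dotNr dotZr ReN Re_realCM.
rewrite Qs_mulmx dot_sumr Re_sum sqvnorm_orthonormal_sum //.
set S1 := \sum_(i <- _) complex.Re _; set S2 := \sum_(i <- _) sqnormc _.
have S1E : S1 = \sum_(i <- oneto rs) lam i * sqnormc (dot (u i) x).
  apply: eq_bigr => i _; rewrite dotZr (dotC (u i) x) -mulrA.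
  by rewrite [dot (u i) x * _]mulrC sqnormcE Re_realCM.
have S12 : S2 <= lam 1 * S1.
  rewrite /S2 S1E mulr_sumr big_seq [leRHS]big_seq; apply: ler_sum => i.
  rewrite mem_index_iota => /andP[i1 _]; rewrite sqnormcM sqnormc_real mulrA.
  rewrite ler_wpM2r ?sqnormc_ge0 // expr2 ler_wpM2r ?lam_ge0 //.
  by rewrite lam_le ?i1.
have S10 : 0 <= S1.
  rewrite S1E big_seq sumr_ge0 // => i; rewrite mem_index_iota => /andP[i1 _].
  by rewrite mulr_ge0 ?lam_ge0 ?sqnormc_ge0.
have : al ^+ 2 * S2 <= al * S1.
  apply: le_trans (_ : al ^+ 2 * (lam 1 * S1) <= _); first by rewrite ler_wpM2l ?sqr_ge0.
  by rewrite expr2 -mulrA ler_wpM2l // mulrA ler_piMl.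
by have := mulr_ge0 al0 S10; lra.
Qed.

Let sig_r_ge0 : 0 <= sig r.
Proof. by apply: sig_ge0; rewrite r_gt0. Qed.

Let sig1_ge0 : 0 <= sig 1.
Proof. by apply: sig_ge0; rewrite /= (leq_trans r_gt0). Qed.

Let sig_in_r i : i \in oneto r -> sig r <= sig i <= sig 1.
Proof.
rewrite mem_index_iota ltnS => /andP[i1 ir].
by rewrite !sig_le ?i1 ?ir // (leq_trans ir).
Qed.

Lemma vnorm_gap_comb_step (al : R) y : 0 < al -> al * lam 1 <= 1 ->
  vnorm (gap_comb y) <= vnorm (gap_comb (rescale (fun i => 1 - al * sig i) y))
                        + (2 * al * h + 2 * al ^+ 2 * lam 1 * sig 1) * cnorm y.
Proof.
move=> al0 al_lam; rewrite {1}(gap_comb_step al y) /=.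
set D' := gap_comb _.
apply: le_trans (vnormB _ _) _; apply: le_trans (lerD (vnormD _ _) (lexx _)) _.
rewrite !vnormZr !ger0_norm ?sqr_ge0 ?(ltW al0) //.
have c1 := vnorm_sub_Qs_le D' (ltW al0) al_lam.
have c2 := ler_wpM2l (ltW al0) (vnorm_gapH_comb_le y).
have c3 : vnorm (Qs *m gap_comb (rescale sig y)) <= lam 1 * (2 * (sig 1 * cnorm y)).
  apply: le_trans (vnorm_Qs_le _) _; rewrite ler_wpM2l ?lam_ge0 //.
  apply: le_trans (vnorm_gap_comb_le _) _; rewrite ler_wpM2l //.
  apply: cnorm_rescale_le => // i /sig_in_r /andP[sri si1].
  by rewrite ger0_norm // (le_trans sig_r_ge0).
have := ler_wpM2l (sqr_ge0 al) c3; lra.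
Qed.

(* A step size [al] exhibits [2 h / sig r + O(al)] as a contraction constant;
   letting [al] go to [0] gives the operator-norm Sylvester bound. *)
Lemma vnorm_gap_comb_sylvester y : 0 < sig r ->
  vnorm (gap_comb y) <= 2 * h / sig r * cnorm y.
Proof.
move=> sr0; have l1 := lam_ge0 (leqnn 1); have s1 := sig1_ge0.
have a0 : 0 < (lam 1 + sig 1 + 1)^-1 by rewrite invr_gt0; lra.
apply: (ler_of_small_param (z := 2 * lam 1 * sig 1 / sig r * cnorm y) a0) => al al0.
rewrite -[_^-1]mul1r ler_pdivlMr; last lra.
move=> ala0; have al_lam : al * lam 1 <= 1.
  by have := mulr_ge0 (ltW al0) sig1_ge0; lra.
have al_sig : al * sig 1 <= 1 by have := mulr_ge0 (ltW al0) l1; lra.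
have /andP[_ sr1] := sig_in_r r_in.
have al_sr := ler_wpM2l (ltW al0) sr1.
have : vnorm (gap_comb y) <= (2 * al * h + 2 * al ^+ 2 * lam 1 * sig 1)
                              / (1 - (1 - al * sig r)) * cnorm y.
  apply: (contraction_le (f := fun y => vnorm (gap_comb y)) (g := cnorm) (c := 2)
    (phi := rescale (fun i => 1 - al * sig i))).
  - by move=> z; apply: vnorm_ge0.
  - exact: cnorm_ge0.
  - exact: vnorm_gap_comb_le.
  - by rewrite subr_ge0 (le_trans al_sr) //= ltrBlDr ltrDl mulr_gt0.
  - by rewrite addr_ge0 ?mulr_ge0 ?h_ge0 ?sqr_ge0 ?(ltW al0).
  - move=> z; apply: cnorm_rescale_le => [|i /sig_in_r /andP[sri si1]]; first lra.
    have := ler_wpM2l (ltW al0) sri; have := ler_wpM2l (ltW al0) si1.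
    by move=> ? ?; rewrite ger0_norm; lra.
  - by move=> z; apply: vnorm_gap_comb_step.
rewrite (_ : 1 - (1 - al * sig r) = al * sig r); last by ring.
have -> : (2 * al * h + 2 * al ^+ 2 * lam 1 * sig 1) / (al * sig r)
          = 2 * h / sig r + al * (2 * lam 1 * sig 1 / sig r).
  by field; rewrite !lt0r_neq0.
by rewrite mulrDl => le; rewrite mulrA.
Qed.

Definition rotation_err z := \sum_(i <- oneto r) ((sig i)%:C%C * dot (gap i) z) *: v i.
Definition truncation_err z := \sum_(r.+1 <= i < n.+1) ((sig i)%:C%C * dot (w i) z) *: v i.

Lemma Q_sub_Qr_mulmx Qr z :
  Qr = \sum_(1 <= i < r.+1) ((sig i)%:C)%C *: (v i *m adj (v i)) ->
  (Qs + H) *m z - Qr *m z = rotation_err z + truncation_err z.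
Proof.
move=> ->; rewrite Q_mulmx mulmx_suml (big_cat_nat _ (n := r.+1)) //=.
rewrite /rotation_err /truncation_err addrAC; congr (_ + _).
rewrite -sumrB; apply: eq_bigr => i _.
by rewrite -scalemxAl rank1_mulmx scalerA -scalerBl /gap dotBl mulrBr.
Qed.

Lemma vnorm_truncation_err_le z : vnorm (truncation_err z) <= (lam r.+1 + h) * vnorm z.
Proof.
have [rn|nr] := ltnP r n; last first.
  rewrite /truncation_err big_geq ?ltnS // vnorm0.
  by rewrite mulr_ge0 ?vnorm_ge0 // addr_ge0 ?h_ge0 ?lam_ge0.
have sub : {subset index_iota r.+1 n.+1 <= oneto n}.
  by move=> i; rewrite !mem_index_iota => /andP[ri ->]; rewrite andbT (leq_trans _ ri).
apply: le_trans (_ : sig r.+1 * vnorm z <= _); last first.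
  by rewrite ler_wpM2r ?vnorm_ge0 ?sig_succ_le.
apply: vnorm_expansion_le; rewrite ?iota_uniq //.
- exact: orthonormal_sub w_on sub.
- exact: orthonormal_sub v_on sub.
- by apply: sig_ge0; rewrite rn.
- move=> i; rewrite mem_index_iota ltnS => /andP[ri ni].
  by rewrite ger0_norm ?sig_le ?sig_ge0 ?ni ?(leq_trans _ ri).
Qed.

Lemma Re_dot_rotation_err_le z : 0 < sig r ->
  `|complex.Re (dot z (rotation_err z))| <= (2 * h + 2 * lam 1 * h / sig r) * sqvnorm z.
Proof.
move=> sr0; pose c i := dot (v i) z.
have -> : dot z (rotation_err z) = dot (gap_comb (rescale sig c)) z.
  rewrite /rotation_err /gap_comb dot_sumr dot_suml; apply: eq_bigr => i _.
  by rewrite dotZr dotZl /rescale conj_realCM (dotC (v i) z) /c; ring.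
rewrite -vnorm_sqr expr2 mulrA; apply: le_trans (normr_Re_dot_le _ _) _.
rewrite ler_wpM2r ?vnorm_ge0 // gap_comb_sig; apply: le_trans (vnormB _ _) _.
have cz : cnorm c <= vnorm z by rewrite /cnorm vnormE ler_sqrt ?sqvnorm_ge0 ?bessel.
have l1 := lam_ge0 (leqnn 1); have h0 := h_ge0.
apply: le_trans (_ : (2 * h + 2 * lam 1 * h / sig r) * cnorm c <= _); last first.
  rewrite ler_wpM2l //.
  by have := divr_ge0 (mulr_ge0 l1 h0) (ltW sr0); lra.
rewrite mulrDl; apply: lerD; first exact: vnorm_gapH_comb_le.
apply: le_trans (vnorm_Qs_le _) _.
rewrite (_ : _ * cnorm c = lam 1 * (2 * h / sig r * cnorm c)); last by ring.
by rewrite ler_wpM2l // vnorm_gap_comb_sylvester.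
Qed.

Lemma qform_Qs_Qr_le Qr z :
  Qr = \sum_(1 <= i < r.+1) ((sig i)%:C)%C *: (v i *m adj (v i)) -> 0 < sig r ->
  `|complex.Re (qform Qs z) - complex.Re (qform Qr z)|
    <= (lam r.+1 + 4 * h + 2 * lam 1 * h / sig r) * sqvnorm z.
Proof.
move=> Qr_def sr0; rewrite !qformE -ReB -dotBr.
have -> : Qs *m z - Qr *m z = rotation_err z + truncation_err z - H *m z.
  by rewrite -(Q_sub_Qr_mulmx _ Qr_def) mulmxDl addrAC addrK.
rewrite dotBr dotDr ReB ReD; apply: le_trans (ler_normB _ _) _.
apply: le_trans (lerD (ler_normD _ _) (lexx _)) _.
have rot := Re_dot_rotation_err_le z sr0.
have trunc : `|complex.Re (dot z (truncation_err z))| <= (lam r.+1 + h) * sqvnorm z.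
  rewrite -vnorm_sqr expr2 mulrCA; apply: le_trans (normr_Re_dot_le _ _) _.
  by rewrite ler_wpM2l ?vnorm_ge0 ?vnorm_truncation_err_le.
have pert : `|complex.Re (dot z (H *m z))| <= h * sqvnorm z.
  rewrite -vnorm_sqr expr2 mulrCA; apply: le_trans (normr_Re_dot_le _ _) _.
  by rewrite ler_wpM2l ?vnorm_ge0 ?vnorm_mulmx_le.
have := lerD (lerD rot trunc) pert; congr (_ <= _); ring.
Qed.

Lemma opt_gap_le (K : nat) Qr (OPT : R) zr :
  Qr = \sum_(1 <= i < r.+1) ((sig i)%:C)%C *: (v i *m adj (v i)) ->
  h <= delta lam r / 2 ->
  (exists z, inAKn K z /\ complex.Re (qform Qs z) = OPT) ->
  (forall z, inAKn K z -> complex.Re (qform Qs z) <= OPT) ->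
  inAKn K zr ->
  (forall z, inAKn K z -> complex.Re (qform Qr z) <= complex.Re (qform Qr zr)) ->
  `|OPT - complex.Re (qform Qs zr)|
    <= 16 * (n%:R * (lam r.+1 + lam 1 / delta lam r * h)).
Proof.
move=> Qr_def hd OPT_max OPT_ub zrK zr_max.
have dl := delta_le_lam lam r; have lr0 : 0 < lam r by rewrite lam_gt0 ?r_gt0.
have sr := lam_sub_le_sig; have sr0 : 0 < sig r by have := h_ge0; lra.
have err z : inAKn K z -> `|complex.Re (qform Qs z) - complex.Re (qform Qr z)|
    <= n%:R * (lam r.+1 + 4 * h + 2 * lam 1 * h / sig r).
  by move=> zK; rewrite mulrC -(sqvnorm_AK zK) qform_Qs_Qr_le.
apply: le_trans (argmax_approx_le err OPT_max OPT_ub zrK zr_max) _.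
have -> : 16 = 2 * 8 :> R by rewrite -natrM.
rewrite -[2 * 8 * _]mulrA ler_wpM2l ?ler0n // [8 * _]mulrCA ler_wpM2l ?ler0n //.
apply: perturbation_constant_le; rewrite ?lam_ge0 ?h_ge0 //; try lra.
exact: le_trans dl (lam_le _).
Qed.

End Perturbation.

Theorem theorem3 : exists c : nat, forall (R : realType) (n K r rs : nat)
  (Qs H Qr : 'M[R[i]]_n) (lam : nat -> R) (u : nat -> 'cV[R[i]]_n)
  (sig : nat -> R) (v w : nat -> 'cV[R[i]]_n) (OPT : R) (zr : 'cV[R[i]]_n),
  (2 <= K)%N ->
  (* Q* = sum_{i=1}^{r*} lam_i u_i u_i^dagger, orthonormal u, lam_1 >= ... >= lam_{r*} > 0,
     lam_j = 0 for j > r* *)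
  (rs <= n)%N ->
  (forall j, (1 <= j <= rs)%N -> 0 < lam j) ->
  (forall j, (rs < j)%N -> lam j = 0) ->
  (forall j, (1 <= j)%N -> lam j.+1 <= lam j) ->
  (forall i j, (1 <= i <= rs)%N -> (1 <= j <= rs)%N ->
     adj (u i) *m u j = (i == j)%:R%:M) ->
  Qs = \sum_(1 <= i < rs.+1) ((lam i)%:C)%C *: (u i *m adj (u i)) ->
  (* an SVD of Q = Q* + H *)
  (forall i j, (1 <= i <= n)%N -> (1 <= j <= n)%N ->
     adj (v i) *m v j = (i == j)%:R%:M) ->
  (forall i j, (1 <= i <= n)%N -> (1 <= j <= n)%N ->
     adj (w i) *m w j = (i == j)%:R%:M) ->
  (forall j, (1 <= j <= n)%N -> 0 <= sig j) ->
  (forall j, (1 <= j)%N -> (j < n)%N -> sig j.+1 <= sig j) ->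
  Qs + H = \sum_(1 <= i < n.+1) ((sig i)%:C)%C *: (v i *m adj (w i)) ->
  (* Q_r = V_r Sigma_r V_r^dagger *)
  Qr = \sum_(1 <= i < r.+1) ((sig i)%:C)%C *: (v i *m adj (v i)) ->
  (1 <= r)%N -> (r <= rs)%N ->
  specnorm H <= delta lam r / 2 ->
  (* OPT-Q* = max_{z in A_K^n} z^dagger Q* z *)
  (exists z, inAKn K z /\ complex.Re (qform Qs z) = OPT) ->
  (forall z, inAKn K z -> complex.Re (qform Qs z) <= OPT) ->
  (* z_r attains max_{z in A_K^n} z^dagger Q_r z *)
  inAKn K zr ->
  (forall z, inAKn K z -> complex.Re (qform Qr z) <= complex.Re (qform Qr zr)) ->
  `|OPT - complex.Re (qform Qs zr)|
    <= c%:R * (n%:R * (lam r.+1 + lam 1%N / delta lam r * specnorm H)).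
Proof.
exists 16%N => R n K r rs Qs H Qr lam u sig v w OPT zr _ rs_n lam_gt0 lam_eq0 lam_decr
  u_orth Qs_def v_orth w_orth sig_ge0 sig_decr svd Qr_def r_gt0 r_le_rs.
exact: (opt_gap_le rs_n lam_gt0 lam_eq0 lam_decr u_orth Qs_def v_orth w_orth sig_ge0 sig_decr
  svd r_gt0 r_le_rs).
Qed.
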